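(* Let $\phi\ge1$. Consider a knapsack instance with arbitrary profits $p_1,\ldots,p_n\in\mathbb{R}_{\ge0}$ in which each weight $w_i$ is chosen uniformly at random from an arbitrary interval $A_i\subseteq[0,1]$ of length $1/\phi$, independently of the other weights, and let $\mathcal{P}$ be the set of Pareto-optimal solutions. Then for every $t\ge0$ and every $\varepsilon>0$, $\Pr[\exists x\in\mathcal{P}: w^{\mathsf T}x\in(t,t+\varepsilon]]\le n\phi\varepsilon$.
   Context: Solutions are vectors $x\in\{0,1\}^n$. A solution $y$ dominates $x$ if $p^{\mathsf T}y\ge p^{\mathsf T}x$ and $w^{\mathsf T}y\le w^{\mathsf T}x$ with at least one inequality strict; $x$ is Pareto-optimal if no solution dominates it. *)

From HB Require Import structures.
From mathcomp Require Import all_boot all_order all_algebra.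
From mathcomp Require Import all_classical all_reals all_analysis.
Set Implicit Arguments. Unset Strict Implicit. Unset Printing Implicit Defensive.
Import Order.TTheory GRing.Theory Num.Theory.
Local Open Scope classical_set_scope.
Local Open Scope ring_scope.

Definition linval (R : realType) (n : nat) (c : 'I_n -> R) (x : 'I_n -> bool) : R :=
  \sum_(i < n) c i * (x i)%:R.

Definition dominates (R : realType) (n : nat) (p w : 'I_n -> R) (y x : 'I_n -> bool) : Prop :=
  linval p x <= linval p y /\ linval w y <= linval w x /\
  (linval p x < linval p y \/ linval w y < linval w x).

Definition pareto_optimal (R : realType) (n : nat) (p w : 'I_n -> R) (x : 'I_n -> bool) : Prop :=
  forall y : 'I_n -> bool, ~ dominates p w y x.

(* Mutual independence of a finite family of real random variables:
   product rule for all families of measurable sets (taking B i = setT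
   recovers every subfamily). *)
Definition mutually_independent (R : realType) (d : measure_display)
  (T : measurableType d) (P : probability T R) (n : nat) (X : 'I_n -> {RV P >-> R}) : Prop :=
  forall B : 'I_n -> set R, (forall i, measurable (B i)) ->
    P (\bigcap_(i in [set: 'I_n]) (X i @^-1` B i)) = (\prod_(i < n) P (X i @^-1` B i))%E.

Definition uniform_on (R : realType) (d : measure_display) (T : measurableType d)
  (P : probability T R) (X : {RV P >-> R}) (a b : R) : Prop :=
  forall B : set R, measurable B ->
    P (X @^-1` B) = (\int[lebesgue_measure]_(x in B) (uniform_pdf a b x)%:E)%E.

(* Let x be Pareto-optimal with weight in (t, t + eps], and let y be the most
   profitable solution of weight at most t.  As y does not dominate x, it is less
   profitable, so some item i lies in x but not in y; y is then also the most
   profitable i-free solution of weight at most t.  Let C_i be the least weight,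
   not counting item i, of a solution that contains i and beats y.  Since x is
   such a solution and none of them weighs at most t, t < w_i + C_i <= t + eps.
   C_i is a function of the weights other than w_i, hence independent of w_i,
   whose density is at most phi; so each of these n events has probability at
   most phi * eps. *)

From HB Require Import structures.
From mathcomp Require Import all_boot all_order all_algebra.
From mathcomp Require Import all_classical all_reals all_analysis.
From mathcomp Require Import lra measurable_realfun.
Import Order.TTheory GRing.Theory Num.Theory.
Set Implicit Arguments. Unset Strict Implicit. Unset Printing Implicit Defensive.
Local Open Scope classical_set_scope.
Local Open Scope ring_scope.

Lemma content_subadditive_ord d (T : semiRingOfSetsType d) (R : realFieldType)
    (mu : {content set T -> \bar R}) n (A : set T) (F : 'I_n -> set T) :
  measurable A -> (forall i, measurable (F i)) -> A `<=` \bigcup_i F i ->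
  (mu A <= \sum_(i < n) mu (F i))%E.
Proof.
move=> mA mF AF; pose G k := oapp F set0 (insub k).
have GE (i : 'I_n) : G i = F i by rewrite /G valK.
under eq_bigr => i _ do rewrite -GE.
apply: content_subadditive => // [k /= kn|x /AF [i _ Fx]].
  by rewrite -[k]/(val (Ordinal kn)) GE.
by rewrite -bigcup_mkord; exists i => //=; rewrite GE.
Qed.

Lemma measurable_fun_big d (D : measurableType d) (R : realType) (I : Type)
    (r : seq I) (Q : pred I) (op : R -> R -> R) (x0 : D -> R) (F : I -> D -> R) :
  (forall f g : D -> R, measurable_fun setT f -> measurable_fun setT g ->
     measurable_fun setT (fun x => op (f x) (g x))) ->
  measurable_fun setT x0 -> (forall z, measurable_fun setT (F z)) ->
  measurable_fun setT (fun x => \big[op/x0 x]_(z <- r | Q z) F z x).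
Proof.
move=> mop m0 mF; elim: r => [|z r IH]; first by under eq_fun do rewrite big_nil.
by under eq_fun do rewrite big_cons; case: (Q z) => //; exact: mop.
Qed.

Lemma exists_bin (R : realFieldType) (c h y : R) (N : nat) :
  0 < h -> c < y <= c + N%:R * h ->
  exists2 k, (k < N)%N & c + k%:R * h < y <= c + k%:R * h + h.
Proof.
move=> h0 /andP[cy yN].
have [k yk kmin] := ex_minnP (ex_intro (fun k => y <= c + k%:R * h) N yN).
have k0 : (0 < k)%N.
  by case: k yk {kmin} => // /(lt_le_trans cy); rewrite mul0r addr0 ltxx.
exists k.-1; first by rewrite prednK // kmin.
apply/andP; split.
  by rewrite ltNge; apply/negP => /kmin; rewrite leqNgt ltn_predL k0.
by rewrite -addrA -[X in _ * _ + X]mul1r -mulrDl natr1 prednK.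
Qed.

Definition indep_pair (R : realType) d (T : measurableType d) (P : probability T R)
    (X Y : T -> R) :=
  forall A B, measurable A -> measurable B ->
    P (X @^-1` A `&` Y @^-1` B) = (P (X @^-1` A) * P (Y @^-1` B))%E.

Section sum_anticoncentration.
Variables (R : realType) (d : measure_display) (T : measurableType d).
Variables (P : probability T R) (X Y : T -> R) (a b rho : R).
Hypotheses (mX : measurable_fun setT X) (mY : measurable_fun setT Y).
Hypothesis XY_indep : indep_pair P X Y.
Hypothesis ab : a <= b.
Hypothesis X_notin : P (X @^-1` ~` `[a, b]) = 0%E.
Hypothesis X_itv_le : forall c L, 0 <= L -> (P (X @^-1` `]c, (c + L)%R]) <= (rho * L)%:E)%E.

Let rho_ge0 : 0 <= rho.
Proof.
have := le_trans (measure_ge0 P _) (X_itv_le 0 ler01).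
by rewrite mulr1 lee_fin.
Qed.

Lemma measurable_sum_window (t e : R) : measurable [set x | t < X x + Y x <= t + e].
Proof.
rewrite -[X in measurable X]setTI.
have -> : [set x | t < X x + Y x <= t + e] = (X \+ Y) @^-1` `]t, t + e].
  by apply/seteqP; split => x /=; rewrite in_itv.
exact: measurable_funD.
Qed.

Lemma sum_prob_bins_le1 (c h : R) (N : nat) : 0 < h ->
  (\sum_(k < N) P (Y @^-1` `](c + k%:R * h)%R, (c + k%:R * h + h)%R]) <= 1)%E.
Proof.
move=> h0; pose S (k : 'I_N) := Y @^-1` `](c + k%:R * h)%R, (c + k%:R * h + h)%R].
have mS k : measurable (S k) by rewrite -[S k]setTI; exact: mY.
have S_disj : trivIset setT S.
  apply/trivIsetP => k k' _ _ kk'; rewrite -subset0 => x [].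
  rewrite /S /= !in_itv /= => /andP[k1 k2] /andP[k'1 k'2].
  wlog lt_kk' : k k' kk' k1 k2 k'1 k'2 / (k < k')%N.
    move=> wlog_lt; case: (ltngtP k k') => [|lt|eq]; first exact: wlog_lt.
    - by apply: (wlog_lt k' k) => //; rewrite eq_sym.
    - by move: kk'; rewrite (val_inj eq) eqxx.
  have : (k%:R + 1) * h <= k'%:R * h by rewrite ler_pM2r // natr1 ler_nat.
  rewrite mulrDl mul1r; lra.
rewrite -(measure_bigsetU_ord _ _ mS S_disj); apply: probability_le1.
by apply: bigsetU_measurable => k _.
Qed.

Lemma prob_sum_window_le_bins (t e : R) (N : nat) : 0 < e ->
  (P [set x | (t < X x + Y x <= t + e)%R] <=
   (rho * (e + (e + (b - a)) / N.+1%:R))%:E)%E.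
Proof.
move=> e0; set L := e + (b - a); set h := L / N.+1%:R; set c := t - b.
(* On the bin [Y x \in ]c + k h, c + k h + h]] the event confines [X x] to an
   interval of length [e + h]. *)
have h0 : 0 < h by rewrite divr_gt0 // /L; move: ab; lra.
have Nh : N.+1%:R * h = L by rewrite mulrC divfK.
pose S k := Y @^-1` `](c + k%:R * h)%R, (c + k%:R * h + h)%R].
pose J k := X @^-1` `](t - c - k%:R * h - h)%R, (t - c - k%:R * h - h + (e + h))%R].
pose F k := if k is k.+1 then J k `&` S k else X @^-1` ~` `[a, b].
have mS k : measurable (S k) by rewrite -[S k]setTI; exact: mY.
have mJ k : measurable (J k) by rewrite -[J k]setTI; exact: mX.
have mF k : measurable (F k).
  case: k => [|k]; last exact: measurableI.
  by rewrite -[F 0]setTI; apply: mX => //; exact: measurableC.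
have cover : [set x | t < X x + Y x <= t + e] `<=` \big[setU/set0]_(k < N.+2) F k.
  move=> x /andP[E1 E2]; rewrite -bigcup_mkord.
  have [/andP[Xa Xb]|Xab] := boolP (a <= X x <= b); last first.
    by exists 0%N => //=; rewrite /= in_itv /=; exact/negP.
  have [|k kN /andP[Sk1 Sk2]] := @exists_bin _ c h (Y x) N.+1 h0.
    by rewrite Nh /c /L; apply/andP; split; lra.
  exists k.+1 => //=; split; rewrite /S /J /= in_itv /=; apply/andP; split; lra.
apply: le_trans (content_subadditive P (fun k _ => mF k) _ cover) _.
  exact: measurable_sum_window.
rewrite big_ord_recl /= X_notin add0e.
apply: (@le_trans _ _ (\sum_(k < N.+1) ((rho * (e + h))%:E * P (S k)))%E).
  apply: lee_sum => k _; rewrite XY_indep //; apply: lee_wpmul2r => //.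
  by rewrite mulrC addrC; apply: X_itv_le; lra.
rewrite -ge0_sume_distrr; last by move=> k _; exact: measure_ge0.
rewrite -[leRHS]mule1; apply: lee_wpmul2l; last exact: sum_prob_bins_le1.
by rewrite lee_fin mulr_ge0 //; lra.
Qed.

Lemma prob_sum_window_le (t e : R) : 0 < e ->
  (P [set x | (t < X x + Y x <= t + e)%R] <= (rho * e)%:E)%E.
Proof.
move=> e0; apply/lee_addgt0Pr => r r0.
set L := e + (b - a); have L0 : 0 <= L by rewrite /L; move: ab; lra.
set N := Num.bound (rho * L / r).
have rLN : rho * L / r < N%:R.
  by apply: archi_boundP; rewrite divr_ge0 // ?mulr_ge0 // ltW.
apply: le_trans (prob_sum_window_le_bins t N e0) _.
rewrite -EFinD lee_fin mulrDr lerD2l mulrA ler_pdivrMr ?ltr0n // -/L.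
rewrite ltr_pdivrMr // in rLN.
have : N%:R <= N.+1%:R :> R by rewrite ler_nat.
nra.
Qed.

End sum_anticoncentration.

Section uniform_on.
Variables (R : realType) (d : measure_display) (T : measurableType d).
Variables (P : probability T R) (X : {RV P >-> R}) (a b : R).
Hypothesis X_unif : uniform_on X a b.
Hypothesis ab : a < b.

Lemma uniform_on_notin : P (X @^-1` ~` `[a, b]) = 0%E.
Proof.
rewrite X_unif; last exact: measurableC.
by rewrite integral_uniform_pdf setICl integral_set0.
Qed.

Lemma uniform_on_itv_le (c L : R) : 0 <= L ->
  (P (X @^-1` `]c, (c + L)%R]) <= ((b - a)^-1 * L)%:E)%E.
Proof.
move=> L0; rewrite X_unif //.
have ab1_ge0 : 0 <= (b - a)^-1 by rewrite invr_ge0 subr_ge0 ltW.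
apply: (@le_trans _ _
  (\int[lebesgue_measure]_(x in `]c, (c + L)%R]) (cst ((b - a)^-1)%:E) x)%E).
  apply: ge0_le_integral => //.
  - by move=> x _; rewrite lee_fin uniform_pdf_ge0.
  - apply/measurable_EFinP; apply: measurable_funTS; exact: measurable_uniform_pdf.
  - by move=> x _; rewrite lee_fin /uniform_pdf; case: ifP.
have itvL : lebesgue_measure (`]c, (c + L)%R]%classic : set R) = L%:E.
  rewrite lebesgue_measure_itv /= lte_fin ltrDl.
  case: ifPn => [_|]; first by rewrite -EFinD addrAC subrr add0r.
  by rewrite -leNgt => L_le0; have -> : L = 0 by apply/eqP; rewrite eq_le L_le0.
rewrite integral_cst // [X in (_ * X <= _)%E](_ : _ = L%:E); last exact: itvL.
by rewrite -EFinM.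
Qed.

End uniform_on.

Lemma dynkin_indep_with (R : realType) d (T : measurableType d) (P : probability T R)
    (C : set T) :
  measurable C -> dynkin [set A | measurable A /\ P (A `&` C) = (P A * P C)%E].
Proof.
move=> mC; have PE A : measurable A -> P A = (fine (P A))%:E.
  by move=> mA; rewrite fineK // fin_num_measure.
split.
- by split => //; rewrite setTI probability_setT mul1e.
- move=> A [mA AC]; split; first exact: measurableC.
  have -> : P (~` A `&` C) = (P C - P (C `&` A))%E.
    rewrite setIC -setDE; apply: measureD => //.
    by rewrite (le_lt_trans (probability_le1 _ mC)) ?ltry.
  rewrite setIC AC probability_setC //.
  by rewrite muleBl ?mul1e ?fin_num_measure.
- move=> F F_disj FC.
  have mF k : measurable (F k) by case: (FC k).
  have P_bigcup (G : (set T)^nat) : (forall k, measurable (G k)) -> trivIset setT G ->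
      P (\bigcup_(k in setT) G k) = (\sum_(k <oo | k \in setT) P (G k))%E.
    by move=> mG G_disj; apply: measure_bigcup.
  split; first exact: bigcupT_measurable.
  have FC_disj : trivIset setT (fun k => F k `&` C).
    apply/trivIsetP => i j _ _ ij.
    by rewrite setIACA setIid (trivIsetP.1 F_disj i j I I ij) set0I.
  rewrite setI_bigcupl !P_bigcup //; last by move=> k; exact: measurableI.
  rewrite muleC (PE _ mC) -nneseriesZl //; apply: eq_eseriesr => k _.
  by case: (FC k) => _ ->; rewrite -(PE _ mC) muleC.
Qed.

Section independence_from_others.
Variables (R : realType) (d : measure_display) (T : measurableType d).
Variables (P : probability T R) (n : nat) (w : 'I_n -> {RV P >-> R}) (i : 'I_n).

(* A generating pi-system of the sigma-algebra of the [w j], [j != i]. *)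
Definition cylinders_off : set (set T) :=
  [set A | exists B : 'I_n -> set R, [/\ forall j, measurable (B j), B i = setT &
     A = \bigcap_(j in setT) w j @^-1` B j]].

Local Notation T_off := (g_sigma_algebraType cylinders_off).

Lemma cylinders_off_setI_closed : setI_closed cylinders_off.
Proof.
move=> _ _ [B1 [mB1 B1i ->]] [B2 [mB2 B2i ->]].
exists (fun j => B1 j `&` B2 j); split => //; first by move=> j; exact: measurableI.
  by rewrite B1i B2i setIT.
by rewrite -bigcapI; apply: eq_bigcapr => j _; rewrite preimage_setI.
Qed.

Lemma sigma_cylinders_off_measurable A : <<s cylinders_off >> A -> measurable A.
Proof.
apply: smallest_sub; first exact: sigma_algebra_measurable.
move=> _ [B [mB _ ->]].
apply: fin_bigcap_measurable; first exact: finite_finset.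
by move=> j _; exact: measurable_funPTI.
Qed.

Lemma measurable_fun_off_T (f : T -> R) :
  measurable_fun (setT : set T_off) f -> measurable_fun setT f.
Proof.
move=> mf _ Y mY; have := mf measurableT Y mY; rewrite !setTI.
exact: sigma_cylinders_off_measurable.
Qed.

Lemma measurable_fun_off (j : 'I_n) : j != i ->
  measurable_fun (setT : set T_off) (w j).
Proof.
move=> ji _ Y mY; rewrite setTI; apply: sub_sigma_algebra.
exists (fun k => if k == j then Y else setT); split.
- by move=> k; case: ifP.
- by rewrite eq_sym (negbTE ji).
apply/seteqP; split => x /=.
- by move=> Yx k _; case: eqP => [->|].
- by move/(_ j I); rewrite eqxx.
Qed.

Hypothesis w_indep : mutually_independent w.

Lemma cylinders_off_indep (B : set R) : measurable B ->
  cylinders_off `<=` [set A | measurable A /\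
    P (A `&` w i @^-1` B) = (P A * P (w i @^-1` B))%E].
Proof.
move=> mB _ [C [mC Ci ->]]; split.
  apply: fin_bigcap_measurable; first exact: finite_finset.
  by move=> j _; exact: measurable_funPTI.
pose C' j := if j == i then B else C j.
have mC' j : measurable (C' j) by rewrite /C'; case: ifP.
have -> : \bigcap_(j in setT) w j @^-1` C j `&` w i @^-1` B =
          \bigcap_(j in setT) w j @^-1` C' j.
  rewrite (bigcap_setD1 i) // Ci preimage_setT setTI setIC.
  rewrite [RHS](bigcap_setD1 i) // /C' eqxx; congr (_ `&` _).
  by apply: eq_bigcapr => j [_ /eqP/negbTE ->].
rewrite (w_indep mC') (w_indep mC) (bigD1 i) //= [in RHS](bigD1 i) //=.
rewrite /C' eqxx Ci preimage_setT probability_setT mul1e muleC.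
by congr (_ * _)%E; apply: eq_bigr => j /negbTE ->.
Qed.

Lemma indep_pair_off (Y : T -> R) :
  measurable_fun (setT : set T_off) Y -> indep_pair P (w i) Y.
Proof.
move=> mY A B mA mB.
have sYB : <<s cylinders_off >> (Y @^-1` B) by have := mY measurableT B mB; rewrite setTI.
have [_] := @lambda_system_subset _ _ cylinders_off_setI_closed setT _
  ((dynkin_lambda_system _).1 (dynkin_indep_with P (measurable_funPTI (w i) mA)))
  (cylinders_off_indep mA) (fun _ _ => subsetT _) _ sYB.
by rewrite setIC muleC.
Qed.

End independence_from_others.

Lemma linval_ffun (R : realType) n (v : 'I_n -> R) (x : 'I_n -> bool) :
  linval v [ffun j => x j] = linval v x.
Proof. by apply: eq_bigr => j _; rewrite ffunE. Qed.

Lemma linval_ge0 (R : realType) n (c : 'I_n -> R) (x : 'I_n -> bool) :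
  (forall j, 0 <= c j) -> 0 <= linval c x.
Proof. by move=> c0; apply: sumr_ge0 => j _; rewrite mulr_ge0. Qed.

Lemma linval_subset (R : realType) n (c : 'I_n -> R) (x y : 'I_n -> bool) :
  (forall j, 0 <= c j) -> (forall j, x j -> y j) -> linval c x <= linval c y.
Proof.
move=> c0 xy; apply: ler_sum => j _.
by case: (boolP (x j)) => [/xy -> //|_]; rewrite mulr0 mulr_ge0.
Qed.

Section knapsack_loser.
Variables (R : realType) (n : nat) (p : 'I_n -> R) (t : R).
Local Notation sol := {ffun 'I_n -> bool}.

Definition weight_off (i : 'I_n) (v : 'I_n -> R) : ('I_n -> bool) -> R :=
  linval (fun j => if j == i then 0 else v j).

(* The default [0] is harmless because profits are nonnegative. *)
Definition winner_profit_off (i : 'I_n) (v : 'I_n -> R) : R :=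
  \big[Order.max/0]_(z : sol | ~~ z i)
     (if weight_off i v z <= t then linval p z else 0).

(* Exceeds every [weight_off i v z]: it stands for +oo when no solution
   containing [i] beats the winner. *)
Definition weight_off_bound (i : 'I_n) (v : 'I_n -> R) : R :=
  1 + \sum_(z : sol) `|weight_off i v z|.

Definition loser_weight_off (i : 'I_n) (v : 'I_n -> R) : R :=
  \big[Order.min/weight_off_bound i v]_(z : sol)
     (if z i && (winner_profit_off i v < linval p z) then weight_off i v z
      else weight_off_bound i v).

Lemma weight_off_notin i v (z : 'I_n -> bool) : ~~ z i -> weight_off i v z = linval v z.
Proof.
by move=> /negbTE zi; apply: eq_bigr => j _; case: eqP => [->|]; rewrite ?zi ?mulr0.
Qed.

Lemma linval_in i v (z : 'I_n -> bool) : z i -> linval v z = v i + weight_off i v z.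
Proof.
move=> zi; rewrite /weight_off /linval (bigD1 i) //= [in RHS](bigD1 i) //=.
rewrite eqxx zi mul0r add0r mulr1.
by congr (_ + _); apply: eq_bigr => j /negbTE ->.
Qed.

Lemma weight_off_lt_bound i v (z : sol) : weight_off i v z < weight_off_bound i v.
Proof.
rewrite /weight_off_bound (bigD1 z) //=.
have : 0 <= \sum_(y : sol | y != z) `|weight_off i v y| by exact: sumr_ge0.
by have := ler_norm (weight_off i v z); lra.
Qed.

Lemma winner_profit_offE i v (y : sol) : (forall j, 0 <= p j) ->
  ~~ y i -> linval v y <= t ->
  (forall z : sol, linval v z <= t -> linval p z <= linval p y) ->
  winner_profit_off i v = linval p y.
Proof.
move=> p0 yi yt ymax; apply/le_anti/andP; rewrite /winner_profit_off; split.
  apply: bigmax_le => [|z zi]; first exact: linval_ge0.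
  by case: ifP => [|_]; [rewrite weight_off_notin // => /ymax|exact: linval_ge0].
by rewrite (bigD1 y) //= weight_off_notin // yt le_max lexx.
Qed.

Lemma loser_weight_off_le i v (z : sol) :
  z i -> winner_profit_off i v < linval p z -> loser_weight_off i v <= weight_off i v z.
Proof. by move=> zi zwin; rewrite /loser_weight_off (bigD1 z) //= zi zwin ge_min lexx. Qed.

Lemma lt_loser_weight_off i v c : c < weight_off_bound i v ->
  (forall z : sol, z i -> winner_profit_off i v < linval p z -> c < weight_off i v z) ->
  c < loser_weight_off i v.
Proof.
move=> c_bound c_lt; rewrite /loser_weight_off; elim/big_ind: _ => //.
  by move=> x y cx cy; rewrite lt_min cx cy.
by move=> z _; case: ifP => // /andP[zi zwin]; exact: c_lt.
Qed.

Lemma pareto_window_loser (v : 'I_n -> R) (x : 'I_n -> bool) (e : R) :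
  (forall j, 0 <= p j) -> 0 <= t ->
  pareto_optimal p v x -> t < linval v x <= t + e ->
  exists i, t < v i + loser_weight_off i v <= t + e.
Proof.
move=> p0 t0 x_opt /andP[tx xe].
have linval0 : linval v [ffun=> false] <= t.
  by rewrite /linval big1 // => j _; rewrite ffunE mulr0.
have [y yt ymax] := @arg_maxP _ _ sol _ (fun z : sol => linval v z <= t)
  (fun z => linval p z) linval0.
have yx : linval p y < linval p x.
  rewrite ltNge; apply/negP => xy; apply: (x_opt y); do 2!split => //; lra.
have [i /andP[xi yi]] : exists i, x i && ~~ y i.
  apply/existsP; apply: contraTT yx; rewrite negb_exists => /forallP xy.
  by rewrite -leNgt; apply: linval_subset => // j xj; move: (xy j); rewrite xj negbK.
have winE := winner_profit_offE p0 yi yt ymax.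
have Xi : [ffun j => x j] i by rewrite ffunE.
have X_loser : winner_profit_off i v < linval p [ffun j => x j] by rewrite linval_ffun winE.
have xE := linval_in v Xi; rewrite linval_ffun in xE.
exists i; apply/andP; split.
  rewrite -ltrBlDl; apply: lt_loser_weight_off => [|z zi].
    by apply: le_lt_trans (weight_off_lt_bound _ _ [ffun j => x j]); lra.
  rewrite winE ltrBlDl -linval_in // => yz; rewrite ltNge; apply/negP => zt.
  by have : linval p z <= linval p y := ymax z zt; lra.
by have := loser_weight_off_le Xi X_loser; lra.
Qed.

End knapsack_loser.

Lemma measurable_linval d (D : measurableType d) (R : realType) n
    (u : 'I_n -> D -> R) (z : 'I_n -> bool) :
  (forall j, measurable_fun setT (u j)) ->
  measurable_fun setT (fun x => linval (fun j => u j x) z).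
Proof.
move=> mu; apply: measurable_fun_big => // [f g mf mg|j].
  exact: measurable_funD.
by apply: measurable_funM => //; exact: measurable_cst.
Qed.

Section loser_window.
Variables (R : realType) (d : measure_display) (T : measurableType d).
Variables (P : probability T R) (n : nat) (w : 'I_n -> {RV P >-> R}).
Variables (p : 'I_n -> R) (t : R) (i : 'I_n).
Local Notation T_off := (g_sigma_algebraType (cylinders_off w i)).
Local Notation C := (fun x => loser_weight_off p t i (fun j => w j x)).

Lemma measurable_weight_off (z : 'I_n -> bool) :
  measurable_fun (setT : set T_off) (fun x => weight_off i (fun j => w j x) z).
Proof.
apply: (@measurable_linval _ T_off) => j.
by case: eqVneq => [_|ji]; [exact: measurable_cst|exact: measurable_fun_off].
Qed.

Lemma measurable_loser_weight_off : measurable_fun (setT : set T_off) C.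
Proof.
have m_winner : measurable_fun (setT : set T_off)
    (fun x => winner_profit_off p t i (fun j => w j x)).
  apply: measurable_fun_big => // [f g|z]; first exact: measurable_maxr.
  apply: measurable_fun_ifT => //; apply: measurable_fun_ler => //.
  exact: measurable_weight_off.
have m_bound : measurable_fun (setT : set T_off)
    (fun x => weight_off_bound i (fun j => w j x)).
  apply: measurable_funD => //; apply: measurable_fun_big => // [f g|z].
    exact: measurable_funD.
  exact: measurableT_comp (measurable_weight_off z).
apply: measurable_fun_big => // [f g|z]; first exact: measurable_minr.
apply: measurable_fun_ifT => //; last exact: measurable_weight_off.
apply: measurable_and => //; exact: measurable_fun_ltr.
Qed.

Lemma measurable_loser_window (e : R) : measurable [set x | t < w i x + C x <= t + e].
Proof.
apply: measurable_sum_window; first exact: measurable_funPT.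
exact: measurable_fun_off_T measurable_loser_weight_off.
Qed.

Lemma prob_loser_window_le (a phi e : R) : 0 < phi -> 0 < e ->
  uniform_on (w i) a (a + phi^-1) -> mutually_independent w ->
  (P [set x | (t < w i x + C x <= t + e)%R] <= (phi * e)%:E)%E.
Proof.
move=> phi_gt0 e_gt0 w_unif w_indep.
have ab : a < a + phi^-1 by rewrite ltrDl invr_gt0.
have := prob_sum_window_le (measurable_funPT (w i))
  (measurable_fun_off_T measurable_loser_weight_off)
  (indep_pair_off w_indep measurable_loser_weight_off) (ltW ab)
  (uniform_on_notin w_unif) (uniform_on_itv_le w_unif ab) t e_gt0.
by rewrite addrAC subrr add0r invrK.
Qed.

End loser_window.

Section pareto_window_measurable.
Variables (R : realType) (d : measure_display) (T : measurableType d) (n : nat).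
Variables (v : 'I_n -> T -> R) (p : 'I_n -> R).
Hypothesis mv : forall j, measurable_fun setT (v j).

Lemma measurable_dominates (y x : 'I_n -> bool) :
  measurable [set o | dominates p (fun j => v j o) y x].
Proof.
pose f o := [&& linval p x <= linval p y,
  linval (fun j => v j o) y <= linval (fun j => v j o) x
  & (linval p x < linval p y) || (linval (fun j => v j o) y < linval (fun j => v j o) x)].
have mf : measurable_fun setT f.
  have mlin z := measurable_linval z mv.
  apply: measurable_and => //; apply: measurable_and; first exact: measurable_fun_ler.
  by apply: measurable_or => //; exact: measurable_fun_ltr.
rewrite (_ : [set o | _] = f @^-1` [set true]).
  by rewrite -[_ @^-1` _]setTI; exact: mf.
apply/seteqP; split => o; rewrite /f /dominates /=.
- by case=> -> [-> [->|->]]; rewrite ?orbT.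
- by case/and3P=> -> -> /orP[xy|yx]; do 2!split => //; [left|right].
Qed.

Lemma measurable_pareto_window (t e : R) :
  measurable [set o | exists x : 'I_n -> bool, pareto_optimal p (fun j => v j o) x /\
                       (t < linval (fun j => v j o) x <= t + e)].
Proof.
pose W (x : {ffun 'I_n -> bool}) := \bigcap_(y in [set: {ffun 'I_n -> bool}])
  ~` [set o | dominates p (fun j => v j o) y x] `&`
  (fun o => linval (fun j => v j o) x) @^-1` `]t, t + e].
rewrite (_ : [set o | _] = \bigcup_(x in setT) W x).
  apply: fin_bigcup_measurable => [|x _]; first exact: finite_finset.
  apply: measurableI.
    apply: fin_bigcap_measurable => [|y _]; first exact: finite_finset.
    exact/measurableC/measurable_dominates.
  by rewrite -[_ @^-1` _]setTI; apply: measurable_linval.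
apply/seteqP; split => o /=.
- move=> [x [x_opt xw]]; exists [ffun j => x j] => //; split.
    by move=> y _ /=; rewrite /dominates !linval_ffun; exact: x_opt.
  by rewrite /= in_itv /= linval_ffun.
- move=> [x _ [x_opt xw]]; exists x; split; last by move: xw; rewrite /= in_itv.
  by move=> y; have /= := x_opt [ffun j => y j] I; rewrite /dominates !linval_ffun.
Qed.

End pareto_window_measurable.

Theorem lemma2p4 (R : realType) (d : measure_display) (T : measurableType d)
  (P : probability T R) (n : nat) (phi : R) (p : 'I_n -> R)
  (a : 'I_n -> R) (w : 'I_n -> {RV P >-> R}) (t eps : R) :
  1 <= phi ->
  (forall i, 0 <= p i) ->
  (forall i, 0 <= a i /\ a i + phi^-1 <= 1) ->
  (forall i, uniform_on (w i) (a i) (a i + phi^-1)) ->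
  mutually_independent w ->
  0 <= t -> 0 < eps ->
  (P [set omega | exists x : 'I_n -> bool,
        pareto_optimal p (fun i => w i omega) x /\
        (t < linval (fun i => w i omega) x <= t + eps)%R]
   <= (n%:R * phi * eps)%:E)%E.
Proof.
move=> phi1 p0 _ w_unif w_indep t0 eps0.
have phi_gt0 : 0 < phi by lra.
pose F i := [set x | (t < w i x + loser_weight_off p t i (fun j => w j x) <= t + eps)%R].
apply: le_trans (content_subadditive_ord P (F := F) _ _ _) _.
- exact: measurable_pareto_window (fun j => measurable_funPT (w j)) _ _.
- by move=> i; exact: measurable_loser_window.
- move=> x [y [y_opt yw]]; have [i iw] := pareto_window_loser p0 t0 y_opt yw.
  by exists i.
apply: (@le_trans _ _ (\sum_(i < n) (phi * eps)%:E)%E).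
  by apply: lee_sum => i _; exact: prob_loser_window_le.
by rewrite sumEFin sumr_const card_ord -mulrA mulr_natl.
Qed.
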